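(* Let $G=(V,E)$ be a connected graph with positive edge costs $c:E\to\mathbb{R}_+$, let $\alpha\ge 1$, and let $(U,\complement{U})$ be an $\alpha$-approximate minimum cut of $G$. Then there exists a subset $S\subseteq U$ with $|S|\le\lfloor 2\alpha\rfloor+1$ such that $(U,\complement{U})$ is the unique minimum $(S,\complement{U})$-terminal cut.
   Context: A cut is a partition of $V$ into two non-empty parts; for $\emptyset\ne U\subsetneq V$ write $\complement{U}=V\setminus U$, $(U,\complement{U})$ for the corresponding cut, and $d(U)$ for the total cost of edges with exactly one endpoint in $U$. Let $\lambda=\min\{d(U):\emptyset\ne U\subsetneq V\}$. The cut $(U,\complement{U})$ is an $\alpha$-approximate minimum cut if $d(U)\le\alpha\lambda$. For disjoint non-empty $S,T\subseteq V$, a cut $(X,\complement{X})$ is an $(S,T)$-terminal cut if $S\subseteq X\subseteq V\setminus T$; a minimum $(S,T)$-terminal cut is one minimizing $d(X)$ among these. *)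

From mathcomp Require Import all_boot all_order all_algebra.
Set Implicit Arguments. Unset Strict Implicit. Unset Printing Implicit Defensive.
Import Order.TTheory GRing.Theory Num.Theory.
Local Open Scope ring_scope.

(* A finite simple graph on vertex set V: a symmetric irreflexive edge
   relation [e], with edge costs [c x y] for the edge {x,y}. *)
Definition simple_graph (V : finType) (e : rel V) : Prop :=
  irreflexive e /\ symmetric e.

Definition graph_connected (V : finType) (e : rel V) : Prop :=
  forall x y : V, connect e x y.

Definition pos_costs (R : numDomainType) (V : finType) (e : rel V)
  (c : V -> V -> R) : Prop :=
  (forall x y, c x y = c y x) /\ (forall x y, e x y -> 0 < c x y).

(* a cut side: nonempty proper subset *)
Definition is_cut (V : finType) (U : {set V}) : bool :=
  (U != set0) && (U != setT).

Definition cut_cost (R : numDomainType) (V : finType) (e : rel V)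
  (c : V -> V -> R) (U : {set V}) : R :=
  \sum_(x in U) \sum_(y in ~: U | e x y) c x y.

(* (U, ~U) is an alpha-approximate minimum cut: d(U) <= alpha * lambda,
   where lambda is the minimum of d(W) over all cuts W. *)
Definition approx_min_cut (R : numDomainType) (V : finType) (e : rel V)
  (c : V -> V -> R) (alpha : R) (U : {set V}) : Prop :=
  is_cut U /\
  forall W : {set V}, is_cut W -> cut_cost e c U <= alpha * cut_cost e c W.

Definition terminal_cut (V : finType) (S T X : {set V}) : bool :=
  (S \subset X) && (X \subset ~: T).

Definition unique_min_terminal_cut (R : numDomainType) (V : finType)
  (e : rel V) (c : V -> V -> R) (S T U : {set V}) : Prop :=
  [/\ S != set0, T != set0, [disjoint S & T],
      terminal_cut S T U &
      forall X : {set V}, terminal_cut S T X -> X != U ->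
        cut_cost e c U < cut_cost e c X].

(* Among the nonempty S inside U such that every W with S <= W < U costs
   strictly more than U, pick one of least size k; U itself qualifies, and any
   such S makes U the unique minimum (S, ~U)-terminal cut.  If k >= 2,
   minimality yields for each s in S a set X_s < U containing S \ s but not s
   with d(X_s) <= d(U).  Let [misses v] be the set of s with v not in X_s, and
   uncross the X_s into P_s = [missed_only_by s] = {v | misses v = {s}} and
   Z_j = [missed_by_fewer j] = {v | #|misses v| < j}, 3 <= j <= k: every pair is
   separated by at least as many X_s as P_s and Z_j together, so
   sum d(P_s) + sum d(Z_j) <= sum d(X_s) <= k d(U).  Each Z_j lies between S and
   U, so d(Z_j) >= d(U) and sum d(P_s) <= 2 d(U); each P_s is a cut, so
   k d(U) <= alpha sum d(P_s) <= 2 alpha d(U). *)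

From mathcomp Require Import all_boot all_order all_algebra zify.
Import Order.TTheory GRing.Theory Num.Theory.
Local Open Scope ring_scope.

Set Implicit Arguments. Unset Strict Implicit. Unset Printing Implicit Defensive.

Lemma sum_nat_between a b m n :
  (\sum_(m.+1 <= j < m.+1 + n) (a < j <= b) = minn b (m + n) - maxn a m)%N.
Proof.
elim: n => [|n IH]; first by rewrite addn0 big_geq //; lia.
by rewrite addnS big_nat_recr ?leq_addr //= IH; lia.
Qed.

Lemma sum_threshold_neq_le a b m n :
  (\sum_(m.+1 <= j < n) ((a < j) != (b < j)) <= maxn a b - maxn (minn a b) m)%N.
Proof.
have -> : (\sum_(m.+1 <= j < n) ((a < j) != (b < j)) =
           \sum_(m.+1 <= j < n) (minn a b < j <= maxn a b))%N.
  apply: eq_bigr => j _.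
  by case: (ltnP a j); case: (ltnP b j); case: (ltnP (minn a b) j);
    case: (leqP j (maxn a b)) => //=; lia.
have [n_le|m_lt] := leqP n m.+1; first by rewrite big_geq.
by rewrite -(subnKC (ltnW m_lt)) sum_nat_between; lia.
Qed.

Section SingletonsAndThresholds.

Variable T : finType.
Implicit Types S M N : {set T}.

Lemma sum_mem_subset S M : M \subset S -> (\sum_(s in S) (s \in M) = #|M|)%N.
Proof.
move=> MS; rewrite -sum1_card [RHS]big_mkcond [LHS]big_mkcond /=.
apply: eq_bigr => s _; have [sM|_] := boolP (s \in M).
  by rewrite (subsetP MS s sM).
by case: (s \in S).
Qed.

Lemma sum_eq_set1_le S M : (\sum_(s in S) (M == [set s]) <= (#|M| == 1))%N.
Proof.
have [/eqP/cards1P[m ->]|not1] := eqVneq #|M| 1%N.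
  apply: leq_trans (_ : \sum_s (m == s) <= 1)%N.
    rewrite big_mkcond leq_sum // => s _.
    by rewrite (inj_eq set1_inj); case: (s \in S).
  by rewrite (bigD1 m) //= eqxx big1 // => s /negbTE; rewrite eq_sym => ->.
rewrite big1 // => s _; apply/eqP; rewrite eqb0; apply: contra not1 => /eqP->.
by rewrite cards1.
Qed.

Lemma sum_separations_le S M N n : M \subset S -> N \subset S ->
  (\sum_(s in S) ((M == [set s]) != (N == [set s])) +
   \sum_(3 <= j < n) ((#|M| < j) != (#|N| < j)) <=
   \sum_(s in S) ((s \in M) != (s \in N)))%N.
Proof.
move=> MS NS; have [<-|M_neq_N] := eqVneq M N.
  by rewrite !big1 // => *; rewrite eqxx.
have symdiff :
    (\sum_(s in S) ((s \in M) != (s \in N)) = #|M :\: N| + #|N :\: M|)%N.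
  rewrite -!(sum_mem_subset (S := S)) ?(subset_trans (subsetDl _ _)) //.
  rewrite -big_split.
  by apply: eq_bigr => s _; rewrite !inE; case: (s \in M); case: (s \in N).
have singletons : (\sum_(s in S) ((M == [set s]) != (N == [set s])) <=
                   (#|M| == 1) + (#|N| == 1))%N.
  apply: leq_trans (leq_add (sum_eq_set1_le S M) (sum_eq_set1_le S N)).
  rewrite -big_split leq_sum // => s _.
  by case: (M == [set s]); case: (N == [set s]).
have thresholds := sum_threshold_neq_le #|M| #|N| 2 n.
have MN_le_M : (#|M :&: N| <= #|M|)%N by rewrite subset_leq_card ?subsetIl.
have MN_le_N : (#|M :&: N| <= #|N|)%N by rewrite subset_leq_card ?subsetIr.
have MN_lt : (#|M :&: N| < #|M|)%N || (#|M :&: N| < #|N|)%N.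
  rewrite !ltn_neqAle MN_le_M MN_le_N !andbT -negb_and.
  move: M_neq_N; apply: contraNN => /andP[/eqP MN_M /eqP MN_N].
  have /eqP <- : M :&: N == M by rewrite eqEcard subsetIl MN_M leqnn.
  by rewrite eqEcard subsetIr MN_N leqnn.
move: singletons thresholds MN_lt; rewrite symdiff !cardsD [N :&: M]setIC.
by case: (eqVneq #|M| 1%N); case: (eqVneq #|N| 1%N) => /=; lia.
Qed.

End SingletonsAndThresholds.

Definition separates (V : finType) (x y : V) (A : {set V}) : bool :=
  (x \in A) != (y \in A).

Section CutCost.

Variables (R : realDomainType) (V : finType) (e : rel V) (c : V -> V -> R).
Hypotheses (e_sym : symmetric e) (c_sym : forall x y, c x y = c y x)
  (c_gt0 : forall x y, e x y -> 0 < c x y).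

Implicit Types A S U W : {set V}.

Local Notation d := (cut_cost e c).
Local Notation w x y := (if e x y then c x y else 0).

Lemma weight_ge0 x y : 0 <= w x y.
Proof. by case: ifP => // /c_gt0 /ltW. Qed.

Lemma cut_cost_directed A :
  d A = \sum_x \sum_y w x y *+ ((x \in A) && (y \notin A)).
Proof.
rewrite /cut_cost [RHS](bigID (mem A)) /= [X in _ + X]big1 ?addr0; last first.
  by move=> x /negbTE xA; apply: big1 => y _; rewrite xA mulr0n.
apply: eq_bigr => x xA; rewrite big_mkcond; apply: eq_bigr => y _.
by rewrite in_setC xA; case: (y \in A); case: (e x y).
Qed.

Lemma cut_cost_twice A : d A *+ 2 = \sum_x \sum_y w x y *+ separates x y A.
Proof.
rewrite mulr2n {2}cut_cost_directed exchange_big /= cut_cost_directed.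
rewrite -big_split.
apply: eq_bigr => x _; rewrite -big_split; apply: eq_bigr => y _.
rewrite e_sym c_sym /= -mulrnDr /separates.
by case: (x \in A); case: (y \in A).
Qed.

Lemma ler_sum_cut_cost (As Bs : seq {set V}) :
  (forall x y,
     \sum_(A <- As) separates x y A <= \sum_(B <- Bs) separates x y B)%N ->
  \sum_(A <- As) d A <= \sum_(B <- Bs) d B.
Proof.
move=> le_sep; rewrite -[_ <= _](lerMn2r 2) -!sumrMnl.
under eq_bigr do rewrite cut_cost_twice.
under [X in _ <= X]eq_bigr do rewrite cut_cost_twice.
rewrite exchange_big [X in _ <= X]exchange_big /=.
apply: ler_sum => x _; rewrite exchange_big [X in _ <= X]exchange_big /=.
apply: ler_sum => y _; rewrite !sumrMnr.
by apply: ler_wpMn2l; [exact: weight_ge0 | exact: le_sep].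
Qed.

Lemma cut_crossing_edge A : graph_connected e -> is_cut A ->
  exists x y, [&& x \in A, y \notin A & e x y].
Proof.
move=> conn /andP[/set0Pn[x xA]]; rewrite -subTset => /subsetPn[y _ yA].
pose crossing (p : V * V) := [&& p.1 \in A, p.2 \notin A & e p.1 p.2].
have [[u v] cross|no_cross] := pickP crossing; first by exists u, v.
suff A_closed : closed e (mem A).
  by move: (closed_connect A_closed (conn x y)); rewrite xA (negbTE yA).
move=> u v euv; move: (no_cross (u, v)) (no_cross (v, u)).
rewrite /crossing /= (e_sym v) euv.
by case: (u \in A); case: (v \in A).
Qed.

Lemma cut_cost_gt0 A : graph_connected e -> is_cut A -> 0 < d A.
Proof.
move=> conn /(cut_crossing_edge conn)[x [y /and3P[xA yA exy]]].
have c_ge0 u v : e u v -> 0 <= c u v by move/c_gt0/ltW.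
rewrite /cut_cost (bigD1 x) //= (bigD1 y) /=; last by rewrite in_setC yA exy.
apply: (lt_le_trans (c_gt0 exy)); rewrite -addrA lerDl addr_ge0 //.
  by apply: sumr_ge0 => v /andP[/andP[_ /c_ge0]].
by apply: sumr_ge0 => u _; apply: sumr_ge0 => v /andP[_ /c_ge0].
Qed.

Section Uncrossing.

Variables (S : {set V}) (X : V -> {set V}).

Definition misses v := [set t in S | v \notin X t].
Definition missed_only_by s := [set v | misses v == [set s]].
Definition missed_by_fewer j := [set v | #|misses v| < j]%N.

Lemma uncrossing :
  \sum_(s in S) d (missed_only_by s) +
  \sum_(3 <= j < #|S|.+1) d (missed_by_fewer j) <= \sum_(s in S) d (X s).
Proof.
pose As := [seq missed_only_by s | s <- enum S] ++
           [seq missed_by_fewer j | j <- index_iota 3 #|S|.+1].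
have -> : \sum_(s in S) d (missed_only_by s) +
          \sum_(3 <= j < #|S|.+1) d (missed_by_fewer j) = \sum_(A <- As) d A.
  by rewrite big_cat !big_map big_enum.
rewrite -big_enum -(big_map X xpredT); apply: ler_sum_cut_cost => x y.
rewrite big_cat !big_map !big_enum /=.
have misses_sub v : misses v \subset S.
  by apply/subsetP => t; rewrite inE => /andP[].
have -> : (\sum_(s in S) separates x y (X s) =
           \sum_(s in S) ((s \in misses x) != (s \in misses y)))%N.
  apply: eq_bigr => s sS; rewrite !inE sS /separates.
  by case: (x \in X s); case: (y \in X s).
rewrite /separates; under eq_bigr do rewrite !inE.
under [Z in (_ + Z <= _)%N]eq_bigr do rewrite !inE.
exact: sum_separations_le (misses_sub x) (misses_sub y).
Qed.

End Uncrossing.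

Definition strict_min_between (S U : {set V}) : bool :=
  [forall W : {set V}, (S \subset W) && (W \proper U) ==> (d U < d W)].

Lemma strict_min_between_refl U : strict_min_between U U.
Proof.
apply/forallP => W; apply/implyP => /andP[UW WU].
by move: (proper_sub_trans WU UW); rewrite properxx.
Qed.

Lemma strict_min_between_terminal_cut S U :
  S != set0 -> S \subset U -> U != setT -> strict_min_between S U ->
  unique_min_terminal_cut e c S (~: U) U.
Proof.
move=> S_nz SU U_nT /forallP S_min; split => //.
- by rewrite -setCT (inj_eq (@setC_inj _)).
- by rewrite disjoints_subset setCK.
- by rewrite /terminal_cut setCK SU subxx.
move=> W /andP[SW]; rewrite setCK => WU W_nU.
by move: (S_min W); rewrite SW properEneq W_nU WU.
Qed.

Definition cheap_cut_avoiding U S (s : V) W : Prop :=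
  [/\ S :\ s \subset W, s \notin W, W \subset U & d W <= d U].

Lemma cheap_cut_avoiding_of_minimal U S s :
  (forall T, T != set0 -> T \subset U -> strict_min_between T U ->
     #|S| <= #|T|)%N ->
  strict_min_between S U -> S \subset U -> (1 < #|S|)%N -> s \in S ->
  exists W, cheap_cut_avoiding U S s W.
Proof.
move=> S_minimal S_min SU S_gt1 sS.
have S_s_small : (#|S :\ s| < #|S|)%N by rewrite (cardsD1 s S) sS.
have S_s_nz : S :\ s != set0.
  by move: S_gt1; rewrite (cardsD1 s S) sS add1n ltnS card_gt0.
have S_sU : S :\ s \subset U := subset_trans (subD1set S s) SU.
have /forallPn[W] : ~~ strict_min_between (S :\ s) U.
  apply: contraTN S_s_small => S_s_min; rewrite -leqNgt.
  exact: S_minimal.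
rewrite negb_imply -leNgt => /andP[/andP[S_sW WU] dW].
exists W; split => //; last exact: proper_sub WU.
apply: contraTN dW => sW; rewrite -ltNge.
have SW : S \subset W by rewrite -(setD1K sS) subUset sub1set sW S_sW.
by move/forallP/(_ W): S_min; rewrite SW WU.
Qed.

Section MinimalTerminalSet.

Variables (alpha : R) (U S : {set V}) (X : V -> {set V}).
Hypotheses (U_approx : approx_min_cut e c alpha U)
  (S_min : strict_min_between S U) (S_gt1 : (1 < #|S|)%N)
  (X_cheap : forall s, s \in S -> cheap_cut_avoiding U S s (X s)).

Local Notation misses := (misses S X).

Lemma misses_terminal s : s \in S -> misses s = [set s].
Proof.
move=> sS; apply/setP => t; rewrite !inE.
have [->|t_neq_s] := eqVneq t s; first by rewrite sS; case: (X_cheap sS).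
case tS: (t \in S) => //=; case: (X_cheap tS) => S_tX _ _ _.
by rewrite (subsetP S_tX) // !inE sS eq_sym t_neq_s.
Qed.

Lemma misses_outside v : v \notin U -> misses v = S.
Proof.
move=> vU; apply/setP => t; rewrite inE; case tS: (t \in S) => //=.
by case: (X_cheap tS) => _ _ XU _; apply: contra vU; apply: (subsetP XU).
Qed.

Lemma missed_only_by_cut s : s \in S -> is_cut (missed_only_by S X s).
Proof.
move=> sS; case: U_approx => /andP[_]; rewrite -subTset => /subsetPn[v _ vU] _.
apply/andP; split.
  by apply/set0Pn; exists s; rewrite inE misses_terminal.
apply/eqP => /setP/(_ v); rewrite !inE misses_outside // => /eqP S1.
by move: S_gt1; rewrite S1 cards1.
Qed.

Lemma missed_by_fewer_cost_ge j :
  (3 <= j <= #|S|)%N -> d U <= d (missed_by_fewer S X j).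
Proof.
case/andP=> j_ge3 j_leS; set Z := missed_by_fewer S X j.
have SZ : S \subset Z.
  apply/subsetP => s sS.
  by rewrite inE misses_terminal // cards1 (leq_trans _ j_ge3).
have ZU : Z \subset U.
  apply/subsetP => v; rewrite inE; apply: contraTT => vU.
  by rewrite misses_outside // -leqNgt.
have [->//|Z_neq_U] := eqVneq Z U.
by apply: ltW; move/forallP/(_ Z): S_min; rewrite SZ properEneq Z_neq_U ZU.
Qed.

Lemma sum_missed_only_by_cost_le :
  \sum_(s in S) d (missed_only_by S X s) <= d U *+ 2.
Proof.
have sum_X : \sum_(s in S) d (X s) <= d U *+ #|S|.
  by rewrite -sumr_const ler_sum // => s /X_cheap[].
have sum_Z :
    d U *+ (#|S|.+1 - 3) <= \sum_(3 <= j < #|S|.+1) d (missed_by_fewer S X j).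
  rewrite -sumr_const_nat ler_sum_nat // => j /andP[j_ge3 j_lt].
  by rewrite missed_by_fewer_cost_ge // j_ge3.
have := le_trans (lerD (lexx _) sum_Z) (le_trans (uncrossing S X) sum_X).
by rewrite -{2}(subnK S_gt1) subSS mulrnDr [_ + d U *+ 2]addrC lerD2r.
Qed.

Lemma card_le_twice_alpha : graph_connected e -> #|S|%:R <= 2 * alpha.
Proof.
move=> conn; have [U_cut U_le] := U_approx.
have dU_gt0 := cut_cost_gt0 conn U_cut.
have alpha_ge0 : 0 <= alpha.
  by rewrite -(pmulr_lge0 _ dU_gt0) (le_trans (ltW dU_gt0) (U_le U U_cut)).
have : d U *+ #|S| <= alpha * (d U *+ 2).
  apply: le_trans (ler_wpM2l alpha_ge0 sum_missed_only_by_cost_le).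
  rewrite mulr_sumr -sumr_const ler_sum // => s sS.
  exact: U_le (missed_only_by_cut sS).
rewrite -[d U *+ _]mulr_natr -[d U *+ 2]mulr_natr mulrCA ler_pM2l //.
by rewrite mulrC.
Qed.

End MinimalTerminalSet.

End CutCost.

Theorem theorem2p1 (R : archiRealFieldType) (V : finType) (e : rel V)
    (c : V -> V -> R) (alpha : R) (U : {set V}) :
  simple_graph e -> graph_connected e -> pos_costs e c ->
  1 <= alpha -> approx_min_cut e c alpha U ->
  exists S : {set V},
    [/\ S \subset U,
        (#|S|%:Z <= Num.floor (2 * alpha) + 1)%R &
        unique_min_terminal_cut e c S (~: U) U].
Proof.
move=> [_ e_sym] conn [c_sym c_gt0] alpha_ge1 U_approx.
have [/andP[U_nz U_nT] _] := U_approx.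
pose admissible (S : {set V}) :=
  [&& S != set0, S \subset U & strict_min_between e c S U].
have U_admissible : admissible U.
  by rewrite /admissible U_nz subxx strict_min_between_refl.
have [S /and3P[S_nz SU S_min] S_minimal] :=
  arg_minnP (fun S : {set V} => #|S|) U_admissible.
exists S; split => //; last exact: strict_min_between_terminal_cut.
have floor_ge0 : 0 <= Num.floor (2 * alpha).
  by rewrite floor_ge0 mulr_ge0 // (le_trans ler01 alpha_ge1).
have [S_le1|S_gt1] := leqP #|S| 1.
  by apply: (@le_trans _ _ 1%:Z); rewrite ?lez_nat // lerDr.
have [s|X X_cheap] := @fin_all_exists V (fun=> {set V})
    (fun s W => s \in S -> cheap_cut_avoiding e c U S s W).
  have [sS|_] := boolP (s \in S); last by exists set0.
  have [|W W_cheap] := cheap_cut_avoiding_of_minimal _ S_min SU S_gt1 sS.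
    by move=> T T_nz TU T_min; apply: S_minimal; rewrite /admissible T_nz TU.
  by exists W.
have := card_le_twice_alpha e_sym c_sym c_gt0 U_approx S_min S_gt1 X_cheap conn.
rewrite -(floor_ge_int _ (#|S|%:Z)) => S_le.
by apply: le_trans S_le _; rewrite lerDl.
Qed.
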